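(* Let $\mathscr C$ be the small category defined below. Let $\Omega_1,\Omega_2,\Omega$ be objects of $\mathscr C$ with $\Omega_j\neq\emptyset$, and let $\phi_j:\Omega_j\to\Omega$ ($j=1,2$) be morphisms given by integers $n_j\in\mathrm{Hom}_{\mathscr C}(\Omega_j,\Omega)$. Let $n=\mathrm{lcm}(n_1,n_2)$, write $n=a_jn_j$ with $a_j\in\mathbb{N}^{\times}$, and let $\Omega':=\{\lambda\in[0,\infty)\mid a_j\lambda\in\Omega_j,\ j=1,2\}$. Then $\Omega'$ is an object of $\mathscr C$; if $\Omega'\neq\emptyset$ one has $a_j\in\mathrm{Hom}_{\mathscr C}(\Omega',\Omega_j)$ and $(\Omega',a_1,a_2)$ is the pullback (fibered product) of $\phi_1,\phi_2$ in $\mathscr C$; if $\Omega'=\emptyset$ the pullback of $\phi_1,\phi_2$ is the initial object $\emptyset$ of $\mathscr C$.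
   Context: $\mathbb{N}^{\times}$ denotes the multiplicative monoid of positive integers. The category $\mathscr C$ has as objects the (possibly empty) bounded open subintervals $\Omega$ of the half-line $[0,\infty)$ (with its usual topology, so intervals of the form $[0,a)$, $a>0$, are included). For $\Omega\neq\emptyset$, $\mathrm{Hom}_{\mathscr C}(\Omega,\Omega')=\{n\in\mathbb{N}^{\times}\mid n\Omega\subset\Omega'\}$, and $\mathrm{Hom}_{\mathscr C}(\emptyset,\Omega')$ is a one-point set for every $\Omega'$; composition is multiplication of integers. Thus $\emptyset$ is the initial object. *)

From Stdlib Require Import Reals Arith.
Open Scope R_scope.

(* Objects of the category C: (possibly empty) bounded open subintervals of
   the half-line [0,oo), with its subspace topology. *)
Definition is_obj (O : R -> Prop) : Prop :=
  (forall x, O x -> 0 <= x) /\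
  (forall x y z, O x -> O z -> x <= y <= z -> O y) /\
  (exists M, forall x, O x -> x <= M) /\
  (forall x, O x -> exists e, 0 < e /\
      forall y, 0 <= y -> Rabs (y - x) < e -> O y).

Definition nonempty (O : R -> Prop) : Prop := exists x, O x.

(* Morphisms are encoded as natural numbers.  For the empty source the
   one-point hom-set is encoded as {0}; composition is multiplication. *)
Definition is_hom (O O' : R -> Prop) (n : nat) : Prop :=
  (nonempty O -> (1 <= n)%nat /\ forall x, O x -> O' (INR n * x)) /\
  (~ nonempty O -> n = 0%nat).

Definition is_pullback (P : R -> Prop) (q1 q2 : nat)
    (O1 O2 O : R -> Prop) (n1 n2 : nat) : Prop :=
  is_obj P /\ is_hom P O1 q1 /\ is_hom P O2 q2 /\ (n1 * q1 = n2 * q2)%nat /\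
  forall (X : R -> Prop) (p1 p2 : nat),
    is_obj X -> is_hom X O1 p1 -> is_hom X O2 p2 -> (n1 * p1 = n2 * p2)%nat ->
    exists! u : nat, is_hom X P u /\ (q1 * u = p1)%nat /\ (q2 * u = p2)%nat.

Definition empty_obj : R -> Prop := fun _ => False.

From Stdlib Require Import Reals Arith Lia Lra Psatz Classical.
Open Scope R_scope.

(** The fibered product of [n1 : O1 -> O] and [n2 : O2 -> O] is computed in
    two independent layers.  On the level of morphisms, a pair [(p1, p2)] with
    [n1 p1 = n2 p2] is a common multiple [n1 p1] of [n1] and [n2], hence a
    multiple [u] of [n = lcm n1 n2], and then [p_j = a_j u]: every cone factors
    uniquely through [(a1, a2)].  On the level of intervals, [u] must carry the
    source into the set of [l] with [a_j l] in [O_j], which is an intersection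
    of rescaled objects and hence again an object.  When that set is empty, only
    empty sources admit cones, and the initial object is the pullback. *)

Lemma lcm_div_mul_l (n1 n2 : nat) :
  n1 <> 0%nat -> (n1 * (Nat.lcm n1 n2 / n1))%nat = Nat.lcm n1 n2.
Proof.
  intro h1. destruct (Nat.divide_lcm_l n1 n2) as [z Hz].
  rewrite Hz, Nat.div_mul by exact h1. lia.
Qed.

Lemma lcm_div_mul_r (n1 n2 : nat) :
  n2 <> 0%nat -> (n2 * (Nat.lcm n1 n2 / n2))%nat = Nat.lcm n1 n2.
Proof. intro h2. rewrite Nat.lcm_comm. exact (lcm_div_mul_l n2 n1 h2). Qed.

Lemma lcm_div_pos_l (n1 n2 : nat) :
  n1 <> 0%nat -> n2 <> 0%nat -> (0 < Nat.lcm n1 n2 / n1)%nat.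
Proof.
  intros h1 h2. apply Nat.neq_0_lt_0. intro E.
  pose proof (lcm_div_mul_l n1 n2 h1) as M. rewrite E, Nat.mul_0_r in M.
  symmetry in M. apply Nat.lcm_eq_0 in M. tauto.
Qed.

Lemma lcm_div_pos_r (n1 n2 : nat) :
  n1 <> 0%nat -> n2 <> 0%nat -> (0 < Nat.lcm n1 n2 / n2)%nat.
Proof. intros h1 h2. rewrite Nat.lcm_comm. exact (lcm_div_pos_l n2 n1 h2 h1). Qed.

Lemma mul_eq_lcm_div_factor (n1 n2 p1 p2 : nat) :
  n1 <> 0%nat -> n2 <> 0%nat -> (n1 * p1 = n2 * p2)%nat ->
  exists u, p1 = (Nat.lcm n1 n2 / n1 * u)%nat /\ p2 = (Nat.lcm n1 n2 / n2 * u)%nat.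
Proof.
  intros h1 h2 E.
  assert (D : Nat.divide (Nat.lcm n1 n2) (n1 * p1)).
  { apply Nat.lcm_least; [|rewrite E]; apply Nat.divide_factor_l. }
  destruct D as [u Hu]. exists u. split.
  - apply (Nat.mul_cancel_l _ _ n1 h1).
    rewrite Nat.mul_assoc, lcm_div_mul_l by exact h1. lia.
  - apply (Nat.mul_cancel_l _ _ n2 h2).
    rewrite Nat.mul_assoc, lcm_div_mul_r, <- E by exact h2. lia.
Qed.

Lemma is_obj_ext (P Q : R -> Prop) :
  (forall x, P x <-> Q x) -> is_obj P -> is_obj Q.
Proof.
  intros PQ [pos [itv [[M bnd] opn]]].
  split; [|split; [|split]].
  - intros x Qx. apply pos, PQ, Qx.
  - intros x y z Qx Qz hy. apply PQ, (itv x y z); [apply PQ..|]; assumption.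
  - exists M. intros x Qx. apply bnd, PQ, Qx.
  - intros x Qx. destruct (opn x (proj2 (PQ x) Qx)) as [e [e_pos He]].
    exists e. split; [exact e_pos|]. intros y y_pos hy. apply PQ, He; assumption.
Qed.

Lemma is_obj_empty : is_obj empty_obj.
Proof.
  unfold is_obj, empty_obj. repeat split; try contradiction. exists 0. contradiction.
Qed.

Lemma is_obj_inter (P Q : R -> Prop) :
  is_obj P -> is_obj Q -> is_obj (fun x => P x /\ Q x).
Proof.
  intros [posP [itvP [[M bndP] opnP]]] [_ [itvQ [_ opnQ]]].
  split; [|split; [|split]].
  - intros x [Px _]. exact (posP x Px).
  - intros x y z [Px Qx] [Pz Qz] hy. split; [apply (itvP x _ z) | apply (itvQ x _ z)]; assumption.
  - exists M. intros x [Px _]. exact (bndP x Px).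
  - intros x [Px Qx].
    destruct (opnP x Px) as [e1 [e1_pos He1]]. destruct (opnQ x Qx) as [e2 [e2_pos He2]].
    exists (Rmin e1 e2). split; [apply Rmin_pos; assumption|].
    intros y y_pos hy. pose proof (Rmin_l e1 e2). pose proof (Rmin_r e1 e2).
    split; [apply He1 | apply He2]; lra.
Qed.

Definition scale_preimage (k : R) (P : R -> Prop) : R -> Prop :=
  fun l => 0 <= l /\ P (k * l).

Lemma is_obj_scale_preimage (k : R) (P : R -> Prop) :
  0 < k -> is_obj P -> is_obj (scale_preimage k P).
Proof.
  intros k_pos [posP [itvP [[M bndP] opnP]]]. unfold scale_preimage.
  split; [|split; [|split]].
  - intros x [x_pos _]. exact x_pos.
  - intros x y z [x_pos Px] [_ Pz] [hxy hyz]. split; [lra|].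
    apply (itvP _ _ _ Px Pz). split; apply Rmult_le_compat_l; lra.
  - exists (M / k). intros x [_ Px]. pose proof (bndP _ Px).
    apply (Rmult_le_reg_l k); [exact k_pos|]. field_simplify; lra.
  - intros x [x_pos Px]. destruct (opnP _ Px) as [e [e_pos He]].
    exists (e / k). split; [apply Rdiv_lt_0_compat; assumption|].
    intros y y_pos hy. split; [exact y_pos|]. apply He; [nra|].
    replace (k * y - k * x) with (k * (y - x)) by ring.
    rewrite Rabs_mult, (Rabs_pos_eq k) by lra.
    apply (Rmult_lt_compat_l k) in hy; [|exact k_pos].
    replace (k * (e / k)) with e in hy by (field; lra). exact hy.
Qed.

Lemma is_hom_intro (X Y : R -> Prop) (n : nat) :
  nonempty X -> (1 <= n)%nat -> (forall x, X x -> Y (INR n * x)) -> is_hom X Y n.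
Proof. intros neX hn HXY. split; [auto | intro c; contradiction]. Qed.

Lemma is_hom_empty_source (X Y : R -> Prop) (n : nat) :
  ~ nonempty X -> is_hom X Y n <-> n = 0%nat.
Proof.
  intro neX. split; [intros [_ H]; auto|].
  intros ->. split; [intro c; contradiction | auto].
Qed.

(** Cones with empty source factor uniquely through any candidate (via [0]),
    so only nonempty sources need to be tested. *)
Lemma is_pullback_intro (P : R -> Prop) (q1 q2 : nat) (O1 O2 O : R -> Prop) (n1 n2 : nat) :
  is_obj P -> is_hom P O1 q1 -> is_hom P O2 q2 -> (n1 * q1 = n2 * q2)%nat ->
  (forall (X : R -> Prop) (p1 p2 : nat), is_obj X -> nonempty X ->
     is_hom X O1 p1 -> is_hom X O2 p2 -> (n1 * p1 = n2 * p2)%nat ->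
     exists! u : nat, is_hom X P u /\ (q1 * u = p1)%nat /\ (q2 * u = p2)%nat) ->
  is_pullback P q1 q2 O1 O2 O n1 n2.
Proof.
  intros HP Hq1 Hq2 E univ. do 4 (split; [assumption|]).
  intros X p1 p2 HX Hp1 Hp2 Ep.
  destruct (classic (nonempty X)) as [neX | neX]; [now apply univ|].
  apply (is_hom_empty_source X O1 p1 neX) in Hp1.
  apply (is_hom_empty_source X O2 p2 neX) in Hp2. subst p1 p2.
  exists 0%nat. split.
  - split; [apply (is_hom_empty_source X P 0 neX); reflexivity | lia].
  - intros u [Hu _]. symmetry. exact (proj1 (is_hom_empty_source X P u neX) Hu).
Qed.

Definition fiber_obj (O1 O2 : R -> Prop) (a1 a2 : nat) : R -> Prop :=
  fun l => 0 <= l /\ O1 (INR a1 * l) /\ O2 (INR a2 * l).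

Lemma is_obj_fiber_obj (O1 O2 : R -> Prop) (a1 a2 : nat) :
  is_obj O1 -> is_obj O2 -> (0 < a1)%nat -> (0 < a2)%nat ->
  is_obj (fiber_obj O1 O2 a1 a2).
Proof.
  intros HO1 HO2 h1 h2.
  apply (is_obj_ext (fun l => scale_preimage (INR a1) O1 l /\ scale_preimage (INR a2) O2 l)).
  - unfold fiber_obj, scale_preimage. tauto.
  - apply is_obj_inter; apply is_obj_scale_preimage; try assumption; apply lt_0_INR; assumption.
Qed.

Lemma is_hom_fiber_obj_l (O1 O2 : R -> Prop) (a1 a2 : nat) :
  nonempty (fiber_obj O1 O2 a1 a2) -> (0 < a1)%nat -> is_hom (fiber_obj O1 O2 a1 a2) O1 a1.
Proof. intros ne h1. apply is_hom_intro; [exact ne | lia | intros x Hx; apply Hx]. Qed.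

Lemma is_hom_fiber_obj_r (O1 O2 : R -> Prop) (a1 a2 : nat) :
  nonempty (fiber_obj O1 O2 a1 a2) -> (0 < a2)%nat -> is_hom (fiber_obj O1 O2 a1 a2) O2 a2.
Proof. intros ne h2. apply is_hom_intro; [exact ne | lia | intros x Hx; apply Hx]. Qed.

Lemma maps_into_fiber_obj (X O1 O2 : R -> Prop) (a1 a2 u : nat) :
  (forall x, X x -> 0 <= x) ->
  (forall x, X x -> O1 (INR (a1 * u) * x)) -> (forall x, X x -> O2 (INR (a2 * u) * x)) ->
  forall x, X x -> fiber_obj O1 O2 a1 a2 (INR u * x).
Proof.
  intros posX H1 H2 x Xx. rewrite mult_INR in H1, H2. repeat split.
  - apply Rmult_le_pos; [apply pos_INR | exact (posX x Xx)].
  - rewrite <- Rmult_assoc. exact (H1 x Xx).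
  - rewrite <- Rmult_assoc. exact (H2 x Xx).
Qed.

Lemma cone_factors_through_fiber_obj (O1 O2 : R -> Prop) (n1 n2 : nat)
    (X : R -> Prop) (p1 p2 : nat) :
  n1 <> 0%nat -> n2 <> 0%nat -> is_obj X -> nonempty X ->
  is_hom X O1 p1 -> is_hom X O2 p2 -> (n1 * p1 = n2 * p2)%nat ->
  exists u, p1 = (Nat.lcm n1 n2 / n1 * u)%nat /\ p2 = (Nat.lcm n1 n2 / n2 * u)%nat /\
    is_hom X (fiber_obj O1 O2 (Nat.lcm n1 n2 / n1) (Nat.lcm n1 n2 / n2)) u.
Proof.
  intros h1 h2 [posX _] neX [Hp1 _] [Hp2 _] E.
  destruct (Hp1 neX) as [p1_pos X1]. destruct (Hp2 neX) as [_ X2].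
  destruct (mul_eq_lcm_div_factor n1 n2 p1 p2 h1 h2 E) as [u [U1 U2]].
  exists u. split; [exact U1|]. split; [exact U2|].
  apply is_hom_intro; [exact neX | destruct u; lia |].
  apply maps_into_fiber_obj; [exact posX | rewrite <- U1 | rewrite <- U2]; assumption.
Qed.

Lemma is_pullback_fiber_obj (O1 O2 O : R -> Prop) (n1 n2 : nat) :
  is_obj O1 -> is_obj O2 -> n1 <> 0%nat -> n2 <> 0%nat ->
  let a1 := (Nat.lcm n1 n2 / n1)%nat in
  let a2 := (Nat.lcm n1 n2 / n2)%nat in
  nonempty (fiber_obj O1 O2 a1 a2) ->
  is_pullback (fiber_obj O1 O2 a1 a2) a1 a2 O1 O2 O n1 n2.
Proof.
  intros HO1 HO2 h1 h2 a1 a2 ne.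
  pose proof (lcm_div_pos_l n1 n2 h1 h2) as a1_pos.
  pose proof (lcm_div_pos_r n1 n2 h1 h2) as a2_pos.
  pose proof (lcm_div_mul_l n1 n2 h1). pose proof (lcm_div_mul_r n1 n2 h2).
  apply is_pullback_intro;
    [ apply is_obj_fiber_obj; assumption
    | apply is_hom_fiber_obj_l; assumption
    | apply is_hom_fiber_obj_r; assumption
    | unfold a1, a2; lia |].
  intros X p1 p2 HX neX Hp1 Hp2 E.
  destruct (cone_factors_through_fiber_obj O1 O2 n1 n2 X p1 p2 h1 h2 HX neX Hp1 Hp2 E)
    as [u [U1 [U2 Hu]]].
  exists u. split; [split; [exact Hu | unfold a1, a2; lia] |].
  intros v [_ [V1 _]]. apply (Nat.mul_cancel_l _ _ a1); unfold a1 in *; lia.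
Qed.

(** No nonempty object maps to an empty fiber, so only empty cones remain. *)
Lemma is_pullback_empty_obj (O1 O2 O : R -> Prop) (n1 n2 : nat) :
  n1 <> 0%nat -> n2 <> 0%nat ->
  ~ nonempty (fiber_obj O1 O2 (Nat.lcm n1 n2 / n1) (Nat.lcm n1 n2 / n2)) ->
  is_pullback empty_obj 0 0 O1 O2 O n1 n2.
Proof.
  intros h1 h2 empty_fiber.
  apply is_pullback_intro;
    [ exact is_obj_empty
    | apply is_hom_empty_source; [intros [x []] | reflexivity]..
    | lia |].
  intros X p1 p2 HX neX Hp1 Hp2 E.
  destruct (cone_factors_through_fiber_obj O1 O2 n1 n2 X p1 p2 h1 h2 HX neX Hp1 Hp2 E)
    as [u [_ [_ [Hu _]]]].
  destruct (Hu neX) as [_ X_fiber]. destruct neX as [x Xx].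
  exfalso. exact (empty_fiber (ex_intro _ _ (X_fiber x Xx))).
Qed.

Theorem lemma2p4 (O1 O2 O : R -> Prop) (n1 n2 : nat) :
  is_obj O1 -> is_obj O2 -> is_obj O ->
  nonempty O1 -> nonempty O2 ->
  is_hom O1 O n1 -> is_hom O2 O n2 ->
  let n := Nat.lcm n1 n2 in
  let a1 := Nat.div n n1 in
  let a2 := Nat.div n n2 in
  let O' := fun l => 0 <= l /\ O1 (INR a1 * l) /\ O2 (INR a2 * l) in
  is_obj O' /\
  (nonempty O' ->
     is_hom O' O1 a1 /\ is_hom O' O2 a2 /\ is_pullback O' a1 a2 O1 O2 O n1 n2) /\
  (~ nonempty O' -> is_pullback empty_obj 0 0 O1 O2 O n1 n2).
Proof.
  intros HO1 HO2 _ ne1 ne2 [Hn1 _] [Hn2 _] n a1 a2 O'.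
  assert (h1 : n1 <> 0%nat) by (destruct (Hn1 ne1); lia).
  assert (h2 : n2 <> 0%nat) by (destruct (Hn2 ne2); lia).
  pose proof (lcm_div_pos_l n1 n2 h1 h2) as a1_pos.
  pose proof (lcm_div_pos_r n1 n2 h1 h2) as a2_pos.
  split; [exact (is_obj_fiber_obj O1 O2 a1 a2 HO1 HO2 a1_pos a2_pos)|]. split.
  - intros ne. split; [|split].
    + exact (is_hom_fiber_obj_l O1 O2 a1 a2 ne a1_pos).
    + exact (is_hom_fiber_obj_r O1 O2 a1 a2 ne a2_pos).
    + exact (is_pullback_fiber_obj O1 O2 O n1 n2 HO1 HO2 h1 h2 ne).
  - exact (is_pullback_empty_obj O1 O2 O n1 n2 h1 h2).
Qed.
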